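(* Let $n\ge1$ and let $T\in\mathcal{L}(\mathcal{H})$ be $n$-hypo-EP. If $T$ satisfies one of the following: (i) $TT^\dagger$ commutes with $T^n+T^\dagger$; (ii) $TT^\dagger$ commutes with $T^n+T^*$; (iii) $T$ commutes with $T^nT^\dagger$; then $T$ is $n$-EP.
   Context: $\mathcal{H}$ is a Hilbert space, $\mathcal{L}(\mathcal{H})$ the bounded operators on it; $R(\cdot)$ denotes range. For $T$ with closed range, $T^\dagger$ is its Moore–Penrose inverse (unique solution of $TT^\dagger T=T$, $T^\dagger TT^\dagger=T^\dagger$, $(T^\dagger T)^*=T^\dagger T$, $(TT^\dagger)^*=TT^\dagger$). $T$ is $n$-hypo-EP if it has closed range and $R(T^n)\subset R(T^* )$. $T$ is $n$-EP if it has closed range and $T^nT^\dagger=T^\dagger T^n$. *)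

From HB Require Import structures.
From mathcomp Require Import all_boot all_order all_algebra.
From mathcomp Require Import all_classical all_reals all_analysis.
From mathcomp Require Import complex.
Set Implicit Arguments. Unset Strict Implicit. Unset Printing Implicit Defensive.
Import Order.TTheory GRing.Theory Num.Theory.
Import numFieldNormedType.Exports.
Local Open Scope ring_scope.
Local Open Scope classical_set_scope.

(* A complex Hilbert space: a complete normed space H over C = R[i] whose
   norm is induced by the inner product [inner] (linear in the first
   argument, conjugate symmetric, positive definite). *)
Definition is_inner_product (R : realType) (H : completeNormedModType R[i])
  (inner : H -> H -> R[i]) : Prop :=
  [/\ (forall (a : R[i]) (x y z : H), inner (a *: x + y) z = a * inner x z + inner y z),
      (forall x y : H, inner y x = (inner x y)^*),
      (forall x : H, 0 <= inner x x),
      (forall x : H, inner x x = 0 -> x = 0)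
    & (forall x : H, `|x| ^+ 2 = inner x x)].

Definition bounded_op (R : realType) (H : completeNormedModType R[i]) (T : H -> H) : Prop :=
  (forall (a : R[i]) (x y : H), T (a *: x + y) = a *: T x + T y) /\ continuous T.

Definition is_adjoint (R : realType) (H : completeNormedModType R[i])
  (inner : H -> H -> R[i]) (T S : H -> H) : Prop :=
  forall x y : H, inner (T x) y = inner x (S y).

Definition closed_range (R : realType) (H : completeNormedModType R[i]) (T : H -> H) : Prop :=
  closed (range T).

Definition is_MP_inverse (R : realType) (H : completeNormedModType R[i])
  (inner : H -> H -> R[i]) (T S : H -> H) : Prop :=
  [/\ bounded_op S,
      T \o S \o T = T,
      S \o T \o S = S,
      is_adjoint inner (S \o T) (S \o T)
    & is_adjoint inner (T \o S) (T \o S)].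

Definition opow (R : realType) (H : completeNormedModType R[i]) (n : nat) (T : H -> H) : H -> H :=
  iter n T.

Definition opadd (R : realType) (H : completeNormedModType R[i]) (A B : H -> H) : H -> H :=
  fun x => A x + B x.

Definition n_hypo_EP (R : realType) (H : completeNormedModType R[i])
  (inner : H -> H -> R[i]) (n : nat) (T : H -> H) : Prop :=
  closed_range T /\
  forall Ts, is_adjoint inner T Ts -> range (opow n T) `<=` range Ts.

Definition n_EP (R : realType) (H : completeNormedModType R[i])
  (inner : H -> H -> R[i]) (n : nat) (T : H -> H) : Prop :=
  closed_range T /\
  forall Td, is_MP_inverse inner T Td -> opow n T \o Td = Td \o opow n T.

From HB Require Import structures.
From mathcomp Require Import all_boot all_order all_algebra.
From mathcomp Require Import all_classical all_reals all_analysis.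
From mathcomp Require Import complex.
Import numFieldNormedType.Exports.
Import GRing.Theory.
Set Implicit Arguments. Unset Strict Implicit. Unset Printing Implicit Defensive.
Local Open Scope ring_scope.

(* With P := T^dagger T and Q := T T^dagger the orthogonal projections onto
   R(T^* ) and R(T), n-hypo-EP says P T^n = T^n, and then T^n Q = T^n already
   forces T^n T^dagger = T^dagger T^n. Under (i) or (ii) evaluating the
   commutation relation at Q x shows that Q fixes T^dagger (resp. T^* ), and
   then at x it yields T^n Q = T^n. Under (iii), T^n T^dagger = P T^n T^dagger
   = T^dagger T^(n+1) T^dagger = T^dagger T^n P = T^dagger T^n, as n >= 1. *)

Lemma absorb_proj_of_commute_add (V : zmodType) (Q A S : V -> V) :
  {morph Q : x y / x + y} -> (forall x, Q (Q x) = Q x) ->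
  (forall x, Q (A x) = A x) -> (forall x, S (Q x) = S x) ->
  Q \o (fun x => A x + S x) = (fun x => A x + S x) \o Q ->
  forall x, A (Q x) = A x.
Proof.
move=> Q_add QQ QA SQ hQ x.
have hQx y : Q (A y) + Q (S y) = A (Q y) + S (Q y).
  by rewrite -Q_add; exact: (congr1 (@^~ y) hQ).
have QS : Q (S x) = S x.
  by apply: (@addrI _ (A (Q x))); have := hQx (Q x); rewrite QA QQ !SQ.
by apply: (@addIr _ (S x)); have := hQx x; rewrite QA QS SQ.
Qed.

Lemma bounded_opD (R : realType) (H : completeNormedModType R[i]) (S : H -> H) :
  bounded_op S -> {morph S : x y / x + y}.
Proof. by case=> S_lin _ x y; have := S_lin 1 x y; rewrite !scale1r. Qed.

Lemma commute_pow_MP_of_pow_proj_range (R : realType) (H : completeNormedModType R[i])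
  (T Td : H -> H) (n : nat) :
  (forall x, Td (T (opow n T x)) = opow n T x) ->
  (forall x, opow n T (T (Td x)) = opow n T x) ->
  opow n T \o Td = Td \o opow n T.
Proof.
move=> PTn TnQ; apply: funext => x /=.
have TnT y : opow n T (T y) = T (opow n T y) by rewrite /opow -iterSr.
by rewrite -[in RHS]TnQ TnT PTn.
Qed.

Section InnerProduct.
Variables (R : realType) (H : completeNormedModType R[i]).
Variables (inner : H -> H -> R[i]) (hH : is_inner_product inner).

Lemma inner_injl (a b : H) : inner a =1 inner b -> a = b.
Proof.
move=> eq_ab; have [lin _ _ def _] := hH.
apply/subr0_eq/def.
have -> : a - b = (-1) *: b + a by rewrite scaleN1r addrC.
by rewrite lin eq_ab mulN1r addNr.
Qed.

Lemma inner_injr (a b : H) : inner^~ a =1 inner^~ b -> a = b.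
Proof.
move=> eq_ab; apply: inner_injl => v; have [_ cs _ _ _] := hH.
by rewrite (cs v a) (cs v b) eq_ab.
Qed.

Lemma MP_inverse_unique (T X Y : H -> H) :
  is_MP_inverse inner T X -> is_MP_inverse inner T Y -> X = Y.
Proof.
move=> [_ hX1 hX2 hX3 hX4] [_ hY1 hY2 hY3 hY4].
have TXT u : T (X (T u)) = T u by exact: (congr1 (@^~ u) hX1).
have XTX u : X (T (X u)) = X u by exact: (congr1 (@^~ u) hX2).
have TYT u : T (Y (T u)) = T u by exact: (congr1 (@^~ u) hY1).
have TX_TY u : T (X u) = T (Y u).
  apply: inner_injl => v; rewrite -[T (X u)]TYT.
  by rewrite [LHS](hY4 (T (X u)) v) /= (hX4 u (T (Y v))) /= TXT (hY4 u v).
have XT_YT u : X (T u) = Y (T u).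
  apply: inner_injl => v; rewrite -[in LHS]TYT.
  by rewrite [LHS](hX3 (Y (T u)) v) /= (hY3 u (X (T v))) /= TXT (hY3 u v).
apply: funext => u; have YTY : Y (T (Y u)) = Y u by exact: (congr1 (@^~ u) hY2).
by rewrite -XTX TX_TY XT_YT YTY.
Qed.

Section MoorePenrose.
Variables (T Td : H -> H) (hT : bounded_op T) (hTd : is_MP_inverse inner T Td).

Let TTdT x : T (Td (T x)) = T x.
Proof. by case: hTd => _ e _ _ _; exact: (congr1 (@^~ x) e). Qed.

Let Td_add : {morph Td : x y / x + y}.
Proof. by case: hTd => Td_bounded _ _ _ _; exact: bounded_opD. Qed.

Lemma adjoint_proj_range (Ts : H -> H) : is_adjoint inner T Ts ->
  forall y, Ts (T (Td y)) = Ts y.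
Proof.
move=> hTs y; apply: inner_injr => x.
by rewrite -!hTs; case: hTd => _ _ _ _ sym; rewrite -[LHS](sym (T x) y) /= TTdT.
Qed.

Lemma proj_coimage_adjoint (Ts : H -> H) : is_adjoint inner T Ts ->
  forall y, Td (T (Ts y)) = Ts y.
Proof.
move=> hTs y; apply: inner_injr => x.
by case: hTd => _ _ _ sym _; rewrite -[LHS](sym x (Ts y)) /= -!hTs TTdT.
Qed.

Lemma hypo_EP_proj_coimage_pow (n : nat) (Ts : H -> H) :
  is_adjoint inner T Ts -> n_hypo_EP inner n T ->
  forall x, Td (T (opow n T x)) = opow n T x.
Proof.
move=> hTs [_ sub] x; have [y _ <-] : range Ts (opow n T x).
  by apply: sub hTs _ _; exists x.
exact: proj_coimage_adjoint.
Qed.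

Lemma proj_range_pow (n : nat) x : T (Td (opow n.+1 T x)) = opow n.+1 T x.
Proof. by rewrite /opow iterS TTdT. Qed.

Lemma pow_proj_coimage (n : nat) x : opow n.+1 T (Td (T x)) = opow n.+1 T x.
Proof. by rewrite /opow !iterSr TTdT. Qed.

Lemma pow_proj_range_of_commute_add (n : nat) (S : H -> H) :
  (forall x, S (T (Td x)) = S x) ->
  (T \o Td) \o opadd (opow n.+1 T) S = opadd (opow n.+1 T) S \o (T \o Td) ->
  forall x, opow n.+1 T (T (Td x)) = opow n.+1 T x.
Proof.
apply: (@absorb_proj_of_commute_add _ (T \o Td)) => x /=.
- by move=> y; rewrite Td_add (bounded_opD hT).
- by rewrite TTdT.
- exact: proj_range_pow.
Qed.

Lemma commute_pow_MP_of_commute_T (n : nat) :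
  (forall x, Td (T (opow n.+1 T x)) = opow n.+1 T x) ->
  T \o (opow n.+1 T \o Td) = (opow n.+1 T \o Td) \o T ->
  opow n.+1 T \o Td = Td \o opow n.+1 T.
Proof.
move=> PTn hC; apply: funext => x /=.
have TTnTd : T (opow n.+1 T (Td x)) = opow n.+1 T (Td (T x)).
  exact: (congr1 (@^~ x) hC).
by rewrite -[LHS]PTn TTnTd pow_proj_coimage.
Qed.

End MoorePenrose.
End InnerProduct.

Theorem mainTheorem16 (R : realType) (H : completeNormedModType R[i])
  (inner : H -> H -> R[i]) (hH : is_inner_product inner)
  (n : nat) (hn : (1 <= n)%N) (T Ts Td : H -> H)
  (hT : bounded_op T) (hTs : is_adjoint inner T Ts) (hTd : is_MP_inverse inner T Td)
  (hEP : n_hypo_EP inner n T) :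
  ((T \o Td) \o opadd (opow n T) Td = opadd (opow n T) Td \o (T \o Td)
   \/ (T \o Td) \o opadd (opow n T) Ts = opadd (opow n T) Ts \o (T \o Td)
   \/ T \o (opow n T \o Td) = (opow n T \o Td) \o T) ->
  n_EP inner n T.
Proof.
move=> hyp; split; first by case: hEP.
move=> Td' /(MP_inverse_unique hH hTd) <-.
have PTn := hypo_EP_proj_coimage_pow hH hTd hTs hEP.
have [_ _ TdTTd _ _] := hTd.
case: n hn PTn {hEP} hyp => // n _ PTn [hC|[hC|hC]].
- apply: (commute_pow_MP_of_pow_proj_range PTn).
  apply: (pow_proj_range_of_commute_add hT hTd _ hC) => x.
  exact: (congr1 (@^~ x) TdTTd).
- apply: (commute_pow_MP_of_pow_proj_range PTn).
  exact: (pow_proj_range_of_commute_add hT hTd (adjoint_proj_range hH hTd hTs) hC).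
- exact: (commute_pow_MP_of_commute_T hTd PTn hC).
Qed.
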